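(* Let $n=2k$. Let $g$ be a bent Boolean function on $\mathbb{F}_{2^n}$ whose dual $g^*$ satisfies property $(\mathbf{P}_\tau)$ with defining set $\{u_1,\ldots,u_\tau\}$, i.e. $u_1,\ldots,u_\tau\in\mathbb{F}_{2^n}$ are pairwise distinct and $D_{u_i}D_{u_j}g^*=0$ for all $1\le i<j\le\tau$. Let $F(X_1,\ldots,X_\tau)$ be any reduced polynomial in $\mathbb{F}_2[X_1,\ldots,X_\tau]$. Then the Boolean function $g(x)+F(\mathrm{Tr}^n_1(u_1x),\ldots,\mathrm{Tr}^n_1(u_\tau x))$ is bent, with dual $g^*(x)+F(D_{u_1}g^*(x),\ldots,D_{u_\tau}g^*(x))$.
   Context: $\mathrm{Tr}^n_1(x)=\sum_{i=0}^{n-1}x^{2^i}$. For a Boolean function $f$ on $\mathbb{F}_{2^n}$, $W_f(a)=\sum_x(-1)^{f(x)+\mathrm{Tr}^n_1(ax)}$; $f$ is bent if $|W_f(a)|=2^{n/2}$ for all $a$, with dual $f^*$ defined by $W_f(a)=2^{n/2}(-1)^{f^*(a)}$. $D_af(x)=f(x)+f(x+a)$, $D_aD_bf(x)=f(x)+f(x+a)+f(x+b)+f(x+a+b)$. A reduced polynomial in $\mathbb{F}_2[X_1,\ldots,X_\tau]$ is one of the form $\sum_{I\subseteq\{1,\ldots,\tau\}}a_I\prod_{i\in I}X_i$, $a_I\in\mathbb{F}_2$. *)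

From mathcomp Require Import all_boot all_order all_algebra all_field.
Set Implicit Arguments. Unset Strict Implicit. Unset Printing Implicit Defensive.
Import GRing.Theory Num.Theory.
Local Open Scope ring_scope.

Definition trace (F : finFieldType) (n : nat) (x : F) : F :=
  \sum_(i < n) x ^+ (2 ^ i).

(* Its value in F_2 = {0,1}, encoded as a boolean (true = 1). *)
Definition trb (F : finFieldType) (n : nat) (x : F) : bool := trace n x == 1.

(* Boolean functions are F -> bool, addition in F_2 is xor (addb). *)
Definition walsh (F : finFieldType) (n : nat) (f : F -> bool) (a : F) : int :=
  \sum_(x : F) (-1) ^+ (f x (+) trb n (a * x)).

(* f is bent with dual fs: W_f(a) = 2^(n/2) (-1)^{fs(a)} for all a (n = 2k). *)
Definition bent_with_dual (F : finFieldType) (n k : nat) (f fs : F -> bool) : Prop :=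
  forall a : F, walsh n f a = (2 ^+ k) * (-1) ^+ (fs a).

Definition Dder (F : finFieldType) (a : F) (f : F -> bool) : F -> bool :=
  fun x => f x (+) f (x + a).

(* Reduced polynomial sum_{I subset {1..tau}} c_I prod_{i in I} X_i over F_2,
   given by its coefficient family c, evaluated at X : 'I_tau -> F_2. *)
Definition reduced_eval (tau : nat) (c : {set 'I_tau} -> bool)
  (X : 'I_tau -> bool) : bool :=
  \big[addb/false]_(I : {set 'I_tau}) (c I && [forall i in I, X i]).

From mathcomp Require Import all_boot all_order all_algebra all_field.
From mathcomp Require Import ring.
Import GRing.Theory Num.Theory.
Local Open Scope ring_scope.

(* Write s(b) = (-1)^b.  On the cube F_2^tau the characters v |-> s(v.y) give
   the inversion formula 2^tau s(P(y)) = sum_v P^(v) s(v.y).  Since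
   v.(Tr(u_i x))_i = Tr(U_v x) with U_v = sum_(v_i = 1) u_i, this turns the
   Walsh coefficient of g + P(Tr(u_1 x), ..., Tr(u_tau x)) at a into
   2^-tau sum_v P^(v) W_g(a + U_v).  Property (P_tau) makes every D_(u_i) g*
   invariant under translation by each u_j, so g*(a + U_v) = g*(a) + v.w with
   w = (D_(u_i) g*(a))_i, and inverting once more yields
   W(a) = 2^k s(g*(a) + P(w)).  The argument works for any Boolean function P
   of tau variables, which is what a reduced polynomial evaluates to. *)

Section AbsoluteTrace.
Variables (F : finFieldType) (n : nat).
Hypothesis hF : #|F| = (2 ^ n)%N.

Lemma pchar2_card : (2%N \in [pchar F]).
Proof. exact: card_finPcharP hF _. Qed.

Lemma exprD_pow2 i (x y : F) : (x + y) ^+ (2 ^ i) = x ^+ (2 ^ i) + y ^+ (2 ^ i).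
Proof. by apply: exprDn_pchar; rewrite pnatX pnatE ?pchar2_card. Qed.

Lemma traceD (x y : F) : trace n (x + y) = trace n x + trace n y.
Proof. by rewrite /trace -big_split; apply: eq_bigr => i _; rewrite exprD_pow2. Qed.

Lemma trace0 : trace n (0 : F) = 0.
Proof. by rewrite /trace big1 // => i _; rewrite expr0n expn_eq0. Qed.

Lemma trace_sqr (x : F) : trace n x ^+ 2 = trace n x.
Proof.
rewrite /trace (big_morph (fun y : F => y ^+ 2) (exprD_pow2 1) (expr0n _ 2)).
under eq_bigr => i _ do rewrite -exprM -expnSr.
case: n hF => [|m] hFm; first by rewrite !big_ord0.
(* x^(2^(m+1)) = x^#|F| = x = x^(2^0): squaring cycles the terms of the trace *)
by rewrite big_ord_recr big_ord_recl /= -hFm expf_card expn0 expr1 addrC.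
Qed.

Lemma trace_bool (x : F) : trace n x = (trb n x)%:R.
Proof.
have : trace n x * (trace n x - 1) = 0 by rewrite mulrBr mulr1 -expr2 trace_sqr subrr.
move/eqP; rewrite mulf_eq0 subr_eq0 /trb => /orP[/eqP->|/eqP->]; last by rewrite eqxx.
by rewrite eq_sym oner_eq0.
Qed.

Lemma trbD (x y : F) : trb n (x + y) = trb n x (+) trb n y.
Proof.
have := traceD x y; rewrite !trace_bool.
case: (trb n x); case: (trb n y); case: (trb n (x + y)) => //=;
  by rewrite ?addr0 ?add0r ?(addrr_pchar2 pchar2_card) => /eqP; rewrite ?oner_eq0 // eq_sym oner_eq0.
Qed.

Lemma trb0 : trb n (0 : F) = false.
Proof. by rewrite /trb trace0 eq_sym oner_eq0. Qed.

End AbsoluteTrace.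

Section BooleanCube.
Variable m : nat.
Local Notation cube := {ffun 'I_m -> bool}.

Definition dotb (v y : cube) : bool := \big[addb/false]_i (v i && y i).

Definition cube_walsh (P : cube -> bool) (v : cube) : int :=
  \sum_z (-1) ^+ P z * (-1) ^+ dotb v z.

Lemma dotb_addr (v y z : cube) :
  dotb v [ffun i => y i (+) z i] = dotb v y (+) dotb v z.
Proof.
rewrite /dotb -big_split; apply: eq_bigr => i _.
by rewrite ffunE; case: (v i).
Qed.

Lemma sum_sign_dotb (w : cube) :
  \sum_v (-1) ^+ dotb v w = (2 ^+ m *+ (w == [ffun=> false]) : int).
Proof.
have sign_false : (-1) ^+ false = 1 :> int by [].
under eq_bigr => v _ do
  rewrite /dotb (big_morph (fun b : bool => (-1) ^+ b : int) (@signr_addb _) sign_false).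
rewrite -(bigA_distr_bigA (fun i b => (-1) ^+ (b && w i) : int)) /=.
under eq_bigr => i _ do rewrite big_bool /=.
case: (pickP w) => [i wi | w0].
  have -> : (w == [ffun=> false]) = false by apply/eqP => /ffunP/(_ i); rewrite wi ffunE.
  by rewrite (bigD1 i) //= wi addNr mul0r.
have -> : w = [ffun=> false] by apply/ffunP => i; rewrite w0 ffunE.
rewrite eqxx (eq_bigr (fun=> 2)) ?prodr_const ?card_ord // => i _.
by rewrite ffunE.
Qed.

Lemma cube_walsh_inversion (P : cube -> bool) (y : cube) :
  \sum_v cube_walsh P v * (-1) ^+ dotb v y = 2 ^+ m * (-1) ^+ P y.
Proof.
under eq_bigr => v _ do rewrite mulr_suml.
rewrite exchange_big /=.
under eq_bigr => z _ do
  under eq_bigr => v _ do rewrite -mulrA -signr_addb -dotb_addr.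
under eq_bigr => z _ do rewrite -mulr_sumr sum_sign_dotb.
rewrite (bigD1 y) //= big1 => [|z /negbTE zy].
  rewrite addr0; have -> : [ffun i => y i (+) y i] = [ffun=> false].
    by apply/ffunP => i; rewrite !ffunE addbb.
  by rewrite eqxx mulrC.
suff -> : ([ffun i => z i (+) y i] == [ffun=> false]) = false by rewrite mulr0.
apply/eqP => /ffunP zy0; move/eqP: zy; apply; apply/ffunP => i.
by move: (zy0 i); rewrite !ffunE; case: (z i); case: (y i).
Qed.

End BooleanCube.

Arguments dotb {m}.
Arguments cube_walsh {m}.

Section WalshOfComposite.
Variables (F : finFieldType) (n : nat).
Hypothesis hF : #|F| = (2 ^ n)%N.
Variables (tau : nat) (u : 'I_tau -> F).

Definition trace_vec (x : F) : {ffun 'I_tau -> bool} := [ffun i => trb n (u i * x)].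

Definition span_elt (v : {ffun 'I_tau -> bool}) : F := \sum_(i | v i) u i.

Lemma trb_span_elt_mul v x : trb n (span_elt v * x) = dotb v (trace_vec x).
Proof.
rewrite /span_elt mulr_suml (big_morph (trb n) (trbD F n hF) (trb0 F n)) big_mkcond.
by apply: eq_bigr => i _; rewrite ffunE; case: (v i).
Qed.

Lemma walsh_add_comp (f : F -> bool) (P : {ffun 'I_tau -> bool} -> bool) a :
  2 ^+ tau * walsh n (fun x => f x (+) P (trace_vec x)) a
  = \sum_v cube_walsh P v * walsh n f (a + span_elt v).
Proof.
rewrite /walsh mulr_sumr.
transitivity (\sum_x \sum_v (-1) ^+ (f x (+) trb n (a * x))
                        * (cube_walsh P v * (-1) ^+ dotb v (trace_vec x))).
  by apply: eq_bigr => x _; rewrite -mulr_sumr cube_walsh_inversion !signr_addb; ring.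
rewrite exchange_big /=; apply: eq_bigr => v _; rewrite mulr_sumr.
apply: eq_bigr => x _.
by rewrite mulrDl (trbD F n hF) -trb_span_elt_mul !signr_addb; ring.
Qed.

Variables (k : nat) (g gs : F -> bool).
Hypothesis hbent : bent_with_dual n k g gs.
Hypothesis hP : forall i j : 'I_tau, (i < j)%N ->
  forall x : F, Dder (u i) (Dder (u j) gs) x = false.

Definition dual_derivative_vec (x : F) : {ffun 'I_tau -> bool} :=
  [ffun i => Dder (u i) gs x].

Lemma Dder_dual_addr i j x : Dder (u i) gs (x + u j) = Dder (u i) gs x.
Proof.
rewrite /Dder; case: (ltngtP i j) => [ij|ji|/val_inj->].
- by move: (hP i j ij x); rewrite /Dder [x + u j + u i]addrAC; do 4!case: gs.
- by move: (hP j i ji x); rewrite /Dder; do 4!case: gs.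
- by rewrite -addrA (addrr_pchar2 (pchar2_card F n hF)) addr0 addbC.
Qed.

Lemma dual_add_sum (s : seq 'I_tau) a :
  gs (a + \sum_(i <- s) u i) = gs a (+) \big[addb/false]_(i <- s) Dder (u i) gs a.
Proof.
elim: s a => [|j s IH] a; first by rewrite !big_nil addr0 addbF.
rewrite !big_cons addrA IH.
under eq_bigr => i _ do rewrite Dder_dual_addr.
by rewrite addbA {2}/Dder addKb.
Qed.

Lemma dual_add_span_elt v a :
  gs (a + span_elt v) = gs a (+) dotb v (dual_derivative_vec a).
Proof.
rewrite /span_elt -big_filter dual_add_sum big_filter big_mkcond.
by congr (_ (+) _); apply: eq_bigr => i _; rewrite ffunE; case: (v i).
Qed.

Lemma bent_add_comp (P : {ffun 'I_tau -> bool} -> bool) :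
  bent_with_dual n k (fun x => g x (+) P (trace_vec x))
                     (fun a => gs a (+) P (dual_derivative_vec a)).
Proof.
move=> a; apply: (@mulfI _ (2 ^+ tau)); first by rewrite expf_neq0.
rewrite walsh_add_comp.
transitivity (2 ^+ k * (-1) ^+ gs a *
  \sum_v cube_walsh P v * (-1) ^+ dotb v (dual_derivative_vec a)).
  rewrite mulr_sumr; apply: eq_bigr => v _.
  by rewrite hbent dual_add_span_elt signr_addb; ring.
by rewrite cube_walsh_inversion signr_addb; ring.
Qed.

End WalshOfComposite.

Lemma bent_with_dual_eq (F : finFieldType) (n k : nat) (f f' fs fs' : F -> bool) :
  f =1 f' -> fs =1 fs' -> bent_with_dual n k f fs -> bent_with_dual n k f' fs'.
Proof. by move=> ef efs hf a; rewrite -efs -hf; apply: eq_bigr => x _; rewrite ef. Qed.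

Lemma reduced_eval_ffun (tau : nat) (c : {set 'I_tau} -> bool) (X : 'I_tau -> bool) :
  reduced_eval c [ffun i => X i] = reduced_eval c X.
Proof. by apply: eq_bigr => I _; congr (_ && _); apply: eq_forallb => i; rewrite ffunE. Qed.

Theorem theorem4 (F : finFieldType) (n k : nat) (hn : n = (2 * k)%N)
  (hF : #|F| = (2 ^ n)%N) (g gs : F -> bool)
  (hbent : bent_with_dual n k g gs)
  (tau : nat) (u : 'I_tau -> F) (hu : injective u)
  (hP : forall i j : 'I_tau, (i < j)%N ->
          forall x : F, Dder (u i) (Dder (u j) gs) x = false)
  (c : {set 'I_tau} -> bool) :
  bent_with_dual n k
    (fun x => g x (+) reduced_eval c (fun i => trb n (u i * x)))
    (fun x => gs x (+) reduced_eval c (fun i => Dder (u i) gs x)).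
Proof.
apply: bent_with_dual_eq (@bent_add_comp F n hF tau u k g gs hbent hP (reduced_eval c)) => x;
  by rewrite reduced_eval_ffun.
Qed.
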